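(* Let $\Gamma$ be a group and let $\mathcal{S}=\mathcal{S}(\Pi,A,\xi)$ be a Gr-category of the type $(\Pi,A)$. (i) If $(\theta,F)$ is a factor set on $\Gamma$ with coefficients in $\mathcal{S}$, then there are group homomorphisms $\varphi:\Gamma\to\mathrm{Aut}\,\Pi$ and $f:\Gamma\to\mathrm{Aut}\,A$ such that, for every $\sigma\in\Gamma$, $F^\sigma(x)=\varphi(\sigma)(x)$ and $F^\sigma(x,a)=(\varphi(\sigma)(x),f(\sigma)(a))$ for all $x\in\Pi$, $a\in A$; and, setting $\sigma x=\varphi(\sigma)(x)$, $\sigma a=f(\sigma)(a)$, the $\Pi$-module $A$ becomes a $\Pi$-module $\Gamma$-equivariant, i.e. $\sigma(xa)=(\sigma x)(\sigma a)$ for all $\sigma\in\Gamma,x\in\Pi,a\in A$. (ii) If $(F^\sigma)_{\sigma\in\Gamma}$ is a family of monoidal autoequivalences of $\mathcal{S}$ and $(\theta^{\sigma,\tau}:F^\sigma F^\tau\to F^{\sigma\tau})_{\sigma,\tau\in\Gamma}$ is a family of isomorphisms of monoidal functors satisfying conditions (ii) and (iii) in the definition of a factor set, then condition (i) holds automatically, i.e. $F^1=\mathrm{id}_{\mathcal{S}}$ as a monoidal functor.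
   Context: Let $\Pi$ be a group and $A$ a left $\Pi$-module. A Gr-category of the type $(\Pi,A)$, $\mathcal{S}(\Pi,A,\xi)$, has as objects the elements of $\Pi$, only automorphisms as morphisms, $\mathrm{Aut}(x)=\{x\}\times A$, composition $(x,u)\circ(x,v)=(x,u+v)$, tensor product $x\otimes y=xy$, $(x,u)\otimes(y,v)=(xy,u+xv)$, associativity constraint $a_{x,y,z}=(xyz,\xi(x,y,z))$ for a normalized 3-cocycle $\xi\in Z^3(\Pi,A)$ (group cohomology), and strict unit constraints (unit object $1$). A monoidal functor is written $F=(F,\widetilde F,\widehat F)$ with $\widetilde F_{x,y}:F(x\otimes y)\to F(x)\otimes F(y)$ and $\widehat F:F(1)\to 1$. A factor set on $\Gamma$ with coefficients in a monoidal category $\mathcal{C}$ is a pair $(\theta,F)$: monoidal autoequivalences $F^\sigma:\mathcal{C}\to\mathcal{C}$ ($\sigma\in\Gamma$) and isomorphisms of monoidal functors $\theta^{\sigma,\tau}:F^\sigma F^\tau\to F^{\sigma\tau}$, such that (i) $F^1=\mathrm{id}_{\mathcal{C}}$; (ii) $\theta^{1,\sigma}=\mathrm{id}_{F^\sigma}=\theta^{\sigma,1}$; (iii) $\theta^{\sigma\tau,\gamma}\circ(\theta^{\sigma,\tau}F^\gamma)=\theta^{\sigma,\tau\gamma}\circ(F^\sigma\theta^{\tau,\gamma})$ for all $\sigma,\tau,\gamma\in\Gamma$. *)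

From HB Require Import structures.
From mathcomp Require Import all_boot all_algebra.
Set Implicit Arguments. Unset Strict Implicit. Unset Printing Implicit Defensive.
Import GRing.Theory.
Local Open Scope ring_scope.

Section GrCategory.
Variables (Pi : groupType) (A : zmodType) (act : Pi -> A -> A).

Definition left_module : Prop :=
  [/\ forall x u v, act x (u + v) = act x u + act x v,
      forall u, act 1%g u = u &
      forall x y u, act (x * y)%g u = act x (act y u)].

Definition normalized_3cocycle (xi : Pi -> Pi -> Pi -> A) : Prop :=
  [/\ forall x y z t,
        act x (xi y z t) - xi (x * y)%g z t + xi x (y * z)%g t
          - xi x y (z * t)%g + xi x y z = 0,
      forall y z, xi 1%g y z = 0,
      forall x z, xi x 1%g z = 0 &
      forall x y, xi x y 1%g = 0].

(* In S(Pi,A,xi) a morphism x -> x is a pair (x,u), u in A, and there are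
   no morphisms x -> y for x <> y; composition is addition in A, the identity
   of x is (x,0), (x,u) (x) (y,v) = (xy, u + x v), a_{x,y,z} = (xyz, xi x y z)
   : x(yz) -> (xy)z, unit constraints are identities.
   The data of a (monoidal) functor S -> S: object map, morphism map
   F(x,u) = (fobj x, fmor x u), F~_{x,y} = (.., ftil x y) : F(xy) -> FxFy,
   F^ = (.., fhat) : F(1) -> 1.  Morphisms are recorded by their A-component. *)
Record mfun := MFun {
  fobj : Pi -> Pi;
  fmor : Pi -> A -> A;
  ftil : Pi -> Pi -> A;
  fhat : A }.

Definition idF : mfun := MFun id (fun _ u => u) (fun _ _ => 0) 0.

(* composite F o G of monoidal functors:
   (FG)~_{x,y} = F~_{Gx,Gy} o F(G~_{x,y}),  (FG)^ = F^ o F(G^) *)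
Definition compF (F G : mfun) : mfun :=
  MFun (fun x => fobj F (fobj G x))
       (fun x u => fmor F (fobj G x) (fmor G x u))
       (fun x y => ftil F (fobj G x) (fobj G y)
                   + fmor F (fobj G (x * y)%g) (ftil G x y))
       (fhat F + fmor F (fobj G 1%g) (fhat G)).

Definition is_functor (F : mfun) : Prop :=
  (forall x u v, fmor F x (u + v) = fmor F x u + fmor F x v) /\
  (forall x, fmor F x 0 = 0).

Variable xi : Pi -> Pi -> Pi -> A.

Definition is_monoidal (F : mfun) : Prop :=
  is_functor F /\
      (* F~_{x,y} : F(xy) -> F(x)F(y) and F^ : F(1) -> 1 are morphisms *)
      (forall x y, fobj F (x * y)%g = (fobj F x * fobj F y)%g) /\
      fobj F 1%g = 1%g /\
      (* naturality of F~ : F~ o F(f (x) g) = (Ff (x) Fg) o F~ *)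
      (forall x y u v,
        ftil F x y + fmor F (x * y)%g (u + act x v)
        = (fmor F x u + act (fobj F x) (fmor F y v)) + ftil F x y) /\
      (* compatibility with associativity constraints *)
      (forall x y z,
        (ftil F x y + act (fobj F (x * y)%g) 0) + ftil F (x * y)%g z
          + fmor F (x * (y * z))%g (xi x y z)
        = xi (fobj F x) (fobj F y) (fobj F z)
          + (0 + act (fobj F x) (ftil F y z)) + ftil F x (y * z)%g) /\
      (* compatibility with the (strict) unit constraints *)
      (forall x, 0 + (fhat F + act (fobj F 1%g) 0) + ftil F 1%g x
                 = fmor F x 0) /\
      (forall x, 0 + (0 + act (fobj F x) (fhat F)) + ftil F x 1%g
                 = fmor F x 0).

(* eta : H -> K is a natural transformation (hence an isomorphism, all
   morphisms of S being invertible) between functors *)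
Definition is_nat_iso (H K : mfun) (eta : Pi -> A) : Prop :=
  (forall x, fobj H x = fobj K x) /\
  (forall x u, fmor K x u + eta x = eta x + fmor H x u).

Definition is_mon_iso (F G : mfun) (th : Pi -> A) : Prop :=
  [/\ is_nat_iso F G th,
      forall x y, ftil G x y + th (x * y)%g
                  = (th x + act (fobj F x) (th y)) + ftil F x y &
      fhat G + th 1%g = fhat F].

Definition is_autoeq (F : mfun) : Prop :=
  is_monoidal F /\
  exists (G : mfun) (eta eps : Pi -> A),
    [/\ is_functor G, is_nat_iso (compF G F) idF eta &
        is_nat_iso (compF F G) idF eps].

Variable Gam : groupType.

Definition fs_cond2 (th : Gam -> Gam -> Pi -> A) : Prop :=
  forall s, th 1%g s = (fun _ => 0) /\ th s 1%g = (fun _ => 0).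

(* condition (iii): theta^{st,g} o (theta^{s,t} F^g)
                    = theta^{s,tg} o (F^s theta^{t,g}) *)
Definition fs_cond3 (F : Gam -> mfun) (th : Gam -> Gam -> Pi -> A) : Prop :=
  forall s t g x,
    th (s * t)%g g x + th s t (fobj (F g) x)
    = th s (t * g)%g x
      + fmor (F s) (fobj (F t) (fobj (F g) x)) (th t g x).

Definition fs_family (F : Gam -> mfun) (th : Gam -> Gam -> Pi -> A) : Prop :=
  (forall s, is_autoeq (F s)) /\
  (forall s t, is_mon_iso (compF (F s) (F t)) (F (s * t)%g) (th s t)).

Definition factor_set (F : Gam -> mfun) (th : Gam -> Gam -> Pi -> A) : Prop :=
  [/\ fs_family F th, F 1%g = idF, fs_cond2 th & fs_cond3 F th].

End GrCategory.

Definition is_group_aut (Pi : groupType) (g : Pi -> Pi) : Prop :=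
  bijective g /\ forall x y, g (x * y)%g = (g x * g y)%g.

Definition is_add_aut (A : zmodType) (h : A -> A) : Prop :=
  bijective h /\ forall u v, h (u + v) = h u + h v.

(* In S(Pi, A, xi) all morphisms are automorphisms, so the naturality square
   of F~ for (1, u) (x) (y, v) forces the morphism part of a monoidal functor
   F to be one additive map f, independent of the object, with
   f (x a) = (F x) (f a).  An isomorphism F^s F^t -> F^{st} identifies the
   object maps and, A being abelian, also the morphism maps; since F^1 = id,
   s |-> F^s is an action of Gamma by automorphisms, giving (i).  For (ii),
   theta^{1,1} = 0 makes F^1 idempotent, and an idempotent functor with a
   quasi-inverse is the identity on objects and morphisms; the constraints
   F~ and F^ then vanish by the monoidal-isomorphism conditions. *)
From HB Require Import structures.
From mathcomp Require Import all_boot all_algebra.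
From Stdlib Require Import FunctionalExtensionality.
Local Open Scope ring_scope.
Import GRing.Theory.

Lemma group_action_bij (Gam : groupType) (T : Type) (phi : Gam -> T -> T) :
  phi 1%g =1 id -> (forall s t x, phi (s * t)%g x = phi s (phi t x)) ->
  forall s, bijective (phi s).
Proof.
move=> phi1 phiM s; exists (phi s^-1%g) => x.
  by rewrite -phiM mulVg phi1.
by rewrite -phiM mulgV phi1.
Qed.

Lemma mfun_ext (Pi : groupType) (A : zmodType) (F G : mfun Pi A) :
  fobj F =1 fobj G -> (forall x, fmor F x =1 fmor G x) ->
  (forall x, ftil F x =1 ftil G x) -> fhat F = fhat G -> F = G.
Proof.
case: F G => o m t h [o' m' t' h'] /= eo em et eh.
have -> : o = o' by apply: functional_extensionality.
have -> : m = m'.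
  by do 2 apply: functional_extensionality => ?; apply: em.
have -> : t = t'.
  by do 2 apply: functional_extensionality => ?; apply: et.
by rewrite eh.
Qed.

Section MonoidalFunctors.
Context {Pi : groupType} {A : zmodType} {act : Pi -> A -> A}.
Context {xi : Pi -> Pi -> Pi -> A}.
Hypothesis act_module : left_module act.

Lemma act0 x : act x 0 = 0.
Proof.
case: act_module => actD _ _; apply: (addrI (act x 0)).
by rewrite -actD !addr0.
Qed.

Section OneFunctor.
Context {F : mfun Pi A}.
Hypothesis F_monoidal : is_monoidal act xi F.

Lemma monoidal_fmor_const x u : fmor F x u = fmor F 1%g u.
Proof.
case: F_monoidal => [[_ fmor0] [_ [_ [natural _]]]].
have := natural 1%g x u 0.
by rewrite act0 addr0 fmor0 act0 addr0 mul1g [RHS]addrC => /addrI.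
Qed.

Lemma monoidal_fmor_act x a :
  fmor F 1%g (act x a) = act (fobj F x) (fmor F 1%g a).
Proof.
case: F_monoidal => [[_ fmor0] [_ [_ [natural _]]]].
have := natural x 1%g 0 a.
rewrite add0r fmor0 add0r mulg1 [RHS]addrC => /addrI <-.
by rewrite monoidal_fmor_const.
Qed.

End OneFunctor.

Lemma nat_iso_compF_fobj {F G H : mfun Pi A} {th} :
  is_nat_iso (compF F G) H th -> forall x, fobj H x = fobj F (fobj G x).
Proof. by case=> eobj _ x; rewrite -eobj. Qed.

Lemma nat_iso_compF_fmor {F G H : mfun Pi A} {th} :
  is_nat_iso (compF F G) H th ->
  forall x u, fmor H x u = fmor F (fobj G x) (fmor G x u).
Proof. by case=> _ emor x u; move: (emor x u); rewrite [RHS]addrC => /addIr. Qed.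

Lemma quasi_inverse_fobj_inj {E G : mfun Pi A} {eta} :
  is_nat_iso (compF G E) (idF Pi A) eta -> injective (fobj E).
Proof. by case=> eobj _ x y Exy; rewrite -[x]eobj -[y]eobj /= Exy. Qed.

Lemma quasi_inverse_fmor_inj {E G : mfun Pi A} {eta} :
  is_nat_iso (compF G E) (idF Pi A) eta -> forall x, injective (fmor E x).
Proof.
case=> _ emor x u v Euv.
apply: (addIr (eta x)); move: (emor x u) (emor x v) => /= -> ->.
by rewrite Euv.
Qed.

Lemma autoeq_idempotent_idF {E : mfun Pi A} :
  is_autoeq act xi E -> is_mon_iso act (compF E E) E (fun _ => 0) ->
  E = idF Pi A.
Proof.
move=> [_ [G [eta [eps [_ GE_iso _]]]]] [EE_iso ftil_iso fhat_iso].
have fobj_id x : fobj E x = x.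
  by apply: (quasi_inverse_fobj_inj GE_iso); rewrite -(nat_iso_compF_fobj EE_iso).
have fmor_id x u : fmor E x u = u.
  apply: (quasi_inverse_fmor_inj GE_iso).
  by rewrite [in RHS](nat_iso_compF_fmor EE_iso) fobj_id.
apply: mfun_ext => //= [x y|].
  move: (ftil_iso x y) => /=; rewrite !fobj_id fmor_id act0 !addr0 add0r.
  by move/(canLR (addKr _)); rewrite addNr.
move: fhat_iso => /=; rewrite fmor_id addr0.
by move/(canLR (addKr _)); rewrite addNr.
Qed.

End MonoidalFunctors.

Theorem theorem2p3 (Gam Pi : groupType) (A : zmodType) (act : Pi -> A -> A)
    (xi : Pi -> Pi -> Pi -> A) :
  left_module act -> normalized_3cocycle act xi ->
  (* (i) *)
  (forall (F : Gam -> mfun Pi A) (th : Gam -> Gam -> Pi -> A),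
     factor_set act xi F th ->
     exists (phi : Gam -> Pi -> Pi) (f : Gam -> A -> A),
       (forall s, is_group_aut (phi s)) /\
       (forall s t, phi (s * t)%g = phi s \o phi t) /\
       (forall s, is_add_aut (f s)) /\
       (forall s t, f (s * t)%g = f s \o f t) /\
       (forall s x, fobj (F s) x = phi s x) /\
       (forall s x a, fmor (F s) x a = f s a) /\
       (forall s x a, f s (act x a) = act (phi s x) (f s a))) /\
  (* (ii) *)
  (forall (F : Gam -> mfun Pi A) (th : Gam -> Gam -> Pi -> A),
     fs_family act xi F th -> fs_cond2 th -> fs_cond3 F th ->
     F 1%g = idF Pi A).
Proof.
move=> act_module _; split.
- move=> F th [[F_autoeq F_iso] F1 _ _].
  have F_mon s : is_monoidal act xi (F s) by case: (F_autoeq s).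
  have fconst s := monoidal_fmor_const act_module (F_mon s).
  have phiM s t x : fobj (F (s * t)%g) x = fobj (F s) (fobj (F t) x).
    by case: (F_iso s t) => iso _ _; apply: nat_iso_compF_fobj iso x.
  have fM s t u :
      fmor (F (s * t)%g) 1%g u = fmor (F s) 1%g (fmor (F t) 1%g u).
    by case: (F_iso s t) => iso _ _; rewrite (nat_iso_compF_fmor iso) fconst.
  exists (fun s => fobj (F s)), (fun s => fmor (F s) 1%g).
  split; [|split; [|split; [|split; [|split; [|split]]]]].
  + move=> s; split; last by case: (F_mon s) => _ [].
    by apply: (@group_action_bij _ _ (fun s => fobj (F s))) => // x; rewrite F1.
  + by move=> s t; apply: functional_extensionality => x; rewrite phiM.
  + move=> s; split; last by case: (F_mon s) => [[fmorD _] _].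
    by apply: (@group_action_bij _ _ (fun s => fmor (F s) 1%g)) => // u; rewrite F1.
  + by move=> s t; apply: functional_extensionality => u; rewrite fM.
  + by [].
  + exact: fconst.
  + by move=> s x a; exact: (monoidal_fmor_act act_module (F_mon s) x a).
- move=> F th [F_autoeq F_iso] cond2 _.
  apply: (autoeq_idempotent_idF act_module (F_autoeq 1%g)).
  by have := F_iso 1%g 1%g; rewrite mulg1 (proj1 (cond2 1%g)).
Qed.
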